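(* Consider the nonlinear kinetic equation with longitudinal scattering described in the context, with $d\sigma\ge2$ and $g>0$, and a maximally extended local solution on $[0,z_* )$ satisfying the standing assumptions. Define $$F(z)=V_x(0)+2V_{xp}(0)z+d\sigma(H(0)-\bar H)z^2+\frac{d\sigma R}{3}z^3,\qquad z_0=\frac{\bar H-H(0)+\sqrt{(H(0)-\bar H)^2-2RV_{xp}(0)/(d\sigma)}}{R}.$$ If $F(z_0)\le0$ and either (i) $V_{xp}(0)<0$, or (ii) $V_{xp}(0)>0$ and $H(0)<\bar H-\sqrt{2RV_{xp}(0)/(d\sigma)}$, then the solution develops a singularity at a finite time: $z_*\le z_0$.
   Context: Setting. Let $d\ge1$, $\sigma>0$, $g\in\mathbb R$. Let $\Phi(w,\mathbf p)\ge0$, $(w,\mathbf p)\in\mathbb R\times\mathbb R^d$, be a power spectrum density, rapidly decaying, with $\Phi(w,\mathbf p)=\Phi(-w,\mathbf p)=\Phi(w,-\mathbf p)=\Phi(-w,-\mathbf p)$. The longitudinal scattering operator $\mathcal L$ is either the linear Boltzmann operator $\mathcal L W(\mathbf p)=2\pi\int\Phi(0,\mathbf q-\mathbf p)[W(\mathbf q)-W(\mathbf p)]d\mathbf q$, in which case $R:=2\pi\int\Phi(0,\mathbf q)|\mathbf q|^2d\mathbf q$, or the Fokker–Planck operator $\mathcal LW=\nabla_{\mathbf p}\cdot(\mathbf D\nabla_{\mathbf p}W)$ with $\mathbf D=\pi\int\Phi(0,\mathbf q)\mathbf q\otimes\mathbf q\,d\mathbf q$, in which case $R:=2\,\mathrm{trace}(\mathbf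 D)$. The kinetic equation is $\partial_zW+\mathbf p\cdot\nabla_{\mathbf x}W+\nabla_{\mathbf x}U\cdot\nabla_{\mathbf p}W=\mathcal LW$ for $W(z,\mathbf x,\mathbf p)\ge0$, $\mathbf x,\mathbf p\in\mathbb R^d$, with $\rho(z,\mathbf x)=\int W\,d\mathbf p$ and $U=g\rho^{\sigma}$, understood weakly: $\partial_z\int\Theta W-\int\mathbf p\cdot\nabla_{\mathbf x}\Theta\,W-\int\nabla_{\mathbf x}U\cdot\nabla_{\mathbf p}\Theta\,W-\int(\mathcal L^*\Theta)W=0$ for smooth rapidly decaying $\Theta$. Normalization $\int W\,d\mathbf x\,d\mathbf p=1$. Notation (all integrals over $\mathbb R^{2d}$ against $W(z,\cdot)$): $\bar{\mathbf x}=\int\mathbf xW$, $\bar{\mathbf p}=\int\mathbf pW$, $V_x=\int|\mathbf x-\bar{\mathbf x}|^2W$, $V_p=\int|\mathbf p-\bar{\mathbf p}|^2W$, $V_{xp}=\int(\mathbf x-\bar{\mathbf x})\cdot(\mathbf p-\bar{\mathbf p})W$, Hamiltonian $H=\frac12\int|\mathbf p|^2W-\frac{g}{\sigma+1}\int\rho^{\sigma+1}d\mathbf x$, mean Hamiltonian $\bar H=\frac12|\bar{\mathbf p}|^2$ (constant in $z$ in this setting). Standing assumptions: a local solution exists in the space of nonnegative measures with square-integrable density, finite Dirichlet form $-\int W\mathcal LW$, finite positive variances $V_x,V_p$ and finite Hamiltonian; $[0,z_* )$ is the maximal interval of existence of this solution ($z_*<\infty$ means the solution develops a finite-time singularity);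 on $[0,z_* )$ the weak formulation may be applied with the test functions $x_i,p_i,|\mathbf x|^2,\mathbf x\cdot\mathbf p,|\mathbf p|^2$ (so the energy law and variance identity hold); and $W$ has mixed-state (Wigner measure) structure, so $V_{xp}^2\le V_xV_p$. *)

From mathcomp Require Import all_boot all_order all_algebra.
From mathcomp Require Import all_classical all_reals all_analysis.
Set Implicit Arguments. Unset Strict Implicit. Unset Printing Implicit Defensive.
Import Order.TTheory GRing.Theory Num.Theory.
Import numFieldNormedType.Exports.
Local Open Scope classical_set_scope.
Local Open Scope ring_scope.

(* Real-valued integral over R^n of f : 'rV_n -> R, as the iterated Lebesgue
   integral over the coordinates (Fubini: equals the Lebesgue integral on R^n
   for integrable Borel f). *)
Fixpoint rint {R : realType} (n : nat) : ('rV[R]_n -> R) -> R :=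
  match n return ('rV[R]_n -> R) -> R with
  | 0 => fun f => f 0
  | n'.+1 => fun f =>
      Rintegral (@lebesgue_measure R) setT
        (fun t : R => rint (fun v : 'rV[R]_n' => f (row_mx (t%:M) v)))
  end.

Fixpoint eint {R : realType} (n : nat) : ('rV[R]_n -> \bar R) -> \bar R :=
  match n return ('rV[R]_n -> \bar R) -> \bar R with
  | 0 => fun f => f 0
  | n'.+1 => fun f =>
      (\int[@lebesgue_measure R]_(t in setT)
         eint (fun v : 'rV[R]_n' => f (row_mx (t%:M) v)))%E
  end.

Definition rfin {R : realType} (n : nat) (f : 'rV[R]_n -> R) : Prop :=
  (eint (fun v => (`|f v|)%:E) < +oo)%E.

Definition borel_fun {T : topologicalType} {R : realType} (f : T -> R) : Prop :=
  forall B : set R, measurable B -> <<s open >> (f @^-1` B).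

Definition pint {R : realType} (d : nat) (f : 'rV[R]_d -> 'rV[R]_d -> R) : R :=
  rint (fun x => rint (fun p => f x p)).
Definition pfin {R : realType} (d : nat) (f : 'rV[R]_d -> 'rV[R]_d -> R) : Prop :=
  (eint (fun x => eint (fun p => (`|f x p|)%:E)) < +oo)%E.

Definition dotv {R : realType} (d : nat) (u v : 'rV[R]_d) : R :=
  \sum_(i < d) u 0 i * v 0 i.
Definition sqn {R : realType} (d : nat) (v : 'rV[R]_d) : R := dotv v v.
Definition enorm {R : realType} (d : nat) (v : 'rV[R]_d) : R := Num.sqrt (sqn v).

Definition power_spectrum {R : realType} (d : nat) (Phi : R -> 'rV[R]_d -> R) :=
  [/\ borel_fun (fun wp : R * 'rV[R]_d => Phi wp.1 wp.2),
      (forall w p, 0 <= Phi w p),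
      (forall w p, Phi w p = Phi (- w) p /\ Phi w p = Phi w (- p)
                   /\ Phi w p = Phi (- w) (- p)) &
      (forall k : nat, exists C : R, forall w p,
          (1 + `|w| + enorm p) ^+ k * Phi w p <= C)].

Inductive scattering := LinBoltzmann | FokkerPlanck.

Definition Dmat {R : realType} (d : nat) (Phi : R -> 'rV[R]_d -> R) : 'M[R]_d :=
  \matrix_(i, j) (pi * rint (fun q => Phi 0 q * q 0 i * q 0 j)).

Definition Rconst {R : realType} (d : nat) (L : scattering)
    (Phi : R -> 'rV[R]_d -> R) : R :=
  match L with
  | LinBoltzmann => 2 * pi * rint (fun q => Phi 0 q * sqn q)
  | FokkerPlanck => 2 * \tr (Dmat Phi)
  end.

Section Moments.
Variables (R : realType) (d : nat).
Implicit Types (W : R -> 'rV[R]_d -> 'rV[R]_d -> R) (z : R).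

Definition rho W z (x : 'rV[R]_d) : R := rint (W z x).
Definition xbar W z : 'rV[R]_d := \row_i pint (fun x p => x 0 i * W z x p).
Definition pbar W z : 'rV[R]_d := \row_i pint (fun x p => p 0 i * W z x p).
Definition Vx W z : R := pint (fun x p => sqn (x - xbar W z) * W z x p).
Definition Vp W z : R := pint (fun x p => sqn (p - pbar W z) * W z x p).
Definition Vxp W z : R :=
  pint (fun x p => dotv (x - xbar W z) (p - pbar W z) * W z x p).
Definition potint (sigma : R) W z : R := rint (fun x => rho W z x `^ (sigma + 1)).
Definition Ham (sigma g : R) W z : R :=
  2^-1 * pint (fun x p => sqn p * W z x p) - g / (sigma + 1) * potint sigma W z.
Definition Hbar W z : R := 2^-1 * sqn (pbar W z).

Definition mom_x W z (i : 'I_d) : R := pint (fun x p => x 0 i * W z x p).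
Definition mom_p W z (i : 'I_d) : R := pint (fun x p => p 0 i * W z x p).
Definition mom_xx W z : R := pint (fun x p => sqn x * W z x p).
Definition mom_xp W z : R := pint (fun x p => dotv x p * W z x p).
Definition mom_pp W z : R := pint (fun x p => sqn p * W z x p).
End Moments.

Definition exist_itv {R : realType} (zs : \bar R) : set R :=
  [set z | 0 <= z /\ (z%:E < zs)%E].

Definition ode_law {R : realType} (zs : \bar R) (f f' : R -> R) : Prop :=
  {within exist_itv zs, continuous f} /\
  (forall z, 0 < z -> (z%:E < zs)%E -> is_derive z 1 f (f' z)).

Definition standing_assumptions {R : realType} (d : nat) (sigma g Rc : R)
    (W : R -> 'rV[R]_d -> 'rV[R]_d -> R) (zs : \bar R) : Prop :=
  (0 < zs)%E /\
  (forall z, exist_itv zs z ->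
     [/\ borel_fun (fun xp : 'rV[R]_d * 'rV[R]_d => W z xp.1 xp.2)
           /\ (forall x p, 0 <= W z x p),
         (pfin (W z) /\ pint (W z) = 1)
           /\ pfin (fun x p => W z x p ^+ 2),
         [/\ pfin (fun x p => sqn x * W z x p),
             pfin (fun x p => sqn p * W z x p),
             0 < Vx W z & 0 < Vp W z],
         rfin (fun x => rho W z x `^ (sigma + 1))
       & Vxp W z ^+ 2 <= Vx W z * Vp W z])                     (* mixed-state structure *)
  /\
  (* weak formulation with test functions x_i, p_i, |x|^2, x.p, |p|^2,
     after evaluating L^* on them and integrating the force terms by parts:
     moment laws, variance identity and energy law *)
  [/\ (forall i, ode_law zs (fun z => mom_x W z i) (fun z => mom_p W z i)),
      (forall i, ode_law zs (fun z => mom_p W z i) (fun _ => 0)),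
      ode_law zs (mom_xx W) (fun z => 2 * mom_xp W z),
      ode_law zs (mom_xp W)
        (fun z => mom_pp W z - g * (d%:R * sigma) / (sigma + 1) * potint sigma W z)
    & ode_law zs (Ham sigma g W) (fun _ => Rc / 2)].

(* The first moments evolve affinely (the mean momentum is conserved, the mean
   position moves with it) and the Hamiltonian grows linearly at rate R/2. In the
   virial identity d/dz <x.p> = <|p|^2> - g d sigma/(sigma+1) \int rho^(sigma+1) the
   potential term can be eliminated through the Hamiltonian; since d sigma >= 2 and
   <|p|^2> >= |pbar|^2, this bounds d/dz <x.p> by an affine function of z.
   Integrating twice, and using Vx = <|x|^2> - |xbar|^2 with xbar affine, gives
   Vx(z) <= Vx(0) + 2 Vxp(0) z + d sigma (H(0) - Hbar) z^2 + d sigma R z^3 / 6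
   <= F(z) for z >= 0. The sign conditions make z0 >= 0, so a solution living past
   z0 would have 0 < Vx(z0) <= F(z0) <= 0.
   The variance identities need linearity of the iterated integrals on absolutely
   integrable integrands, which rests on the joint measurability of parametric
   integrals (Fubini-Tonelli). *)

From mathcomp Require Import all_boot all_order all_algebra.
From mathcomp Require Import all_classical all_reals all_analysis.
From mathcomp Require Import measurable_realfun.
From mathcomp Require Import ring lra.
Import Order.TTheory GRing.Theory Num.Theory.
Import numFieldNormedType.Exports.
Local Open Scope classical_set_scope.
Local Open Scope ring_scope.
Set Implicit Arguments. Unset Strict Implicit. Unset Printing Implicit Defensive.

Section ParametricIntegrals.
Variable R : realType.
Local Notation leb := (@lebesgue_measure R).

(* [jointly B f] states [B] of [(s, t_1, ..., t_n) |-> f s (t_1, ..., t_n)], the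
   coordinates of the row being moved one by one into the parameter space: this is
   the joint measurability that Fubini-Tonelli needs along the iterated integrals
   [rint] and [eint]. *)
Fixpoint jointly (Z : Type) (B : forall d (T : measurableType d), (T -> Z) -> Prop)
    (n : nat) : forall d (T : measurableType d), (T -> 'rV[R]_n -> Z) -> Prop :=
  match n return forall d (T : measurableType d), (T -> 'rV[R]_n -> Z) -> Prop with
  | 0 => fun d T f => B d T (fun s => f s 0)
  | n'.+1 => fun d T f =>
      @jointly Z B n' _ (T * R)%type (fun st v => f st.1 (row_mx st.2%:M v))
  end.

Definition jointly_measurable dZ (Z : measurableType dZ) n d (T : measurableType d)
    (f : T -> 'rV[R]_n -> Z) :=
  @jointly Z (fun d T g => measurable_fun setT g) n d T f.

Lemma jointly_comp (Z1 Z2 : Type) (B1 : forall d (T : measurableType d), (T -> Z1) -> Prop)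
    (B2 : forall d (T : measurableType d), (T -> Z2) -> Prop) (phi : Z1 -> Z2) :
  (forall d (T : measurableType d) g, B1 d T g -> B2 d T (fun s => phi (g s))) ->
  forall n d (T : measurableType d) f, @jointly Z1 B1 n d T f ->
    @jointly Z2 B2 n d T (fun s v => phi (f s v)).
Proof. by move=> B12; elim=> [|n IH] d T f /=; [exact: B12 | exact: IH]. Qed.

Lemma jointly_intro (Z : Type) (B : forall d (T : measurableType d), (T -> Z) -> Prop) n :
  forall d (T : measurableType d) (f : T -> 'rV[R]_n -> Z),
  (forall d' (T' : measurableType d') (s0 : T' -> T) (X : T' -> 'rV[R]_n),
    measurable_fun setT s0 -> (forall i, measurable_fun setT (fun s => X s 0 i)) ->
    B d' T' (fun s => f (s0 s) (X s))) ->
  @jointly Z B n d T f.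
Proof.
elim: n => [|n IH] d T f Bf /=.
  apply: (Bf _ _ id (fun _ => 0)); first exact: measurable_id.
  by move=> i; exact: measurable_cst.
apply: IH => d' T' s0 X ms0 mX.
apply: (Bf _ _ (fun s => (s0 s).1) (fun s => row_mx ((s0 s).2)%:M (X s))).
  exact: measurableT_comp measurable_fst ms0.
move=> i; rewrite -[i](@splitK 1 n); case: (@fintype.split 1 n i) => [j|k] /=.
  have -> : (fun s => row_mx (s0 s).2%:M (X s) 0 (lshift n j)) = (fun s => (s0 s).2).
    by apply/funext => s; rewrite row_mxEl mxE (ord1 j) eqxx mulr1n.
  exact: measurableT_comp measurable_snd ms0.
have -> : (fun s => row_mx (s0 s).2%:M (X s) 0 (rshift 1 k)) = (fun s => X s 0 k).
  by apply/funext => s; rewrite row_mxEr.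
exact: mX.
Qed.

Lemma eint_ge0 n (f : 'rV[R]_n -> \bar R) : (forall v, 0 <= f v)%E -> (0 <= eint f)%E.
Proof.
elim: n f => [|n IH] f f0 /=; first exact: f0.
by apply: integral_ge0 => t _; apply: IH.
Qed.

Lemma rint_ge0 n (f : 'rV[R]_n -> R) : (forall v, 0 <= f v) -> 0 <= rint f.
Proof.
elim: n f => [|n IH] f f0 /=; first exact: f0.
by apply: Rintegral_ge0 => t _; apply: IH.
Qed.

Lemma measurable_eint n : forall d (T : measurableType d) (f : T -> 'rV[R]_n -> \bar R),
  jointly_measurable f -> (forall s v, 0 <= f s v)%E ->
  measurable_fun setT (fun s => eint (f s)).
Proof.
elim: n => [|n IH] d T f mf f0 /=; first exact: mf.
move: (IH _ _ _ mf (fun _ _ => f0 _ _)).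
move=> /(@measurable_fun_fubini_tonelli_F _ _ _ _ _ leb); apply => st.
exact: eint_ge0.
Qed.

Lemma measurable_Rintegral d (T : measurableType d) (h : T * R -> R) :
  measurable_fun setT h ->
  measurable_fun setT (fun s => \int[leb]_(t in setT) h (s, t)).
Proof.
move=> mh; apply: measurableT_comp; first exact: fine_measurable.
have mEh : measurable_fun setT (EFin \o h) by exact/measurable_EFinP.
rewrite [X in measurable_fun _ X](_ : _ = (fun s =>
    \int[leb]_(t in setT) ((EFin \o h)^\+ (s, t)) -
    \int[leb]_(t in setT) ((EFin \o h)^\- (s, t)))%E); last first.
  apply/funext => s; rewrite integralE.
  by congr (_ - _)%E; apply: eq_integral => t _; rewrite !(funeposE, funenegE).
apply: emeasurable_funB; apply: (@measurable_fun_fubini_tonelli_F _ _ _ _ _ leb).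
- exact: measurable_funepos.
- by move=> x; exact: funepos_ge0.
- exact: measurable_funeneg.
- by move=> x; exact: funeneg_ge0.
Qed.

Lemma measurable_rint n : forall d (T : measurableType d) (f : T -> 'rV[R]_n -> R),
  jointly_measurable f -> measurable_fun setT (fun s => rint (f s)).
Proof.
elim: n => [|n IH] d T f mf /=; first exact: mf.
exact: measurable_Rintegral (IH _ _ _ mf).
Qed.

Lemma abs_rint_le n : forall d (T : measurableType d) (u : T -> 'rV[R]_n -> R)
    (w : T -> 'rV[R]_n -> \bar R),
  jointly_measurable u -> jointly_measurable w -> (forall s v, 0 <= w s v)%E ->
  (forall s v, `|u s v|%:E <= w s v)%E ->
  forall s, (`|rint (u s)|%:E <= eint (w s))%E.
Proof.
elim: n => [|n IH] d T u w mu mw w0 uw s /=; first exact: uw.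
have mu' := measurable_fun_pair2 s (@measurable_rint n _ _ _ mu).
have mw' := measurable_fun_pair2 s (@measurable_eint n _ _ _ mw (fun _ _ => w0 _ _)).
rewrite /Rintegral; set I := (X in fine X).
have [Ifin|] := boolP (I \is a fin_num); last first.
  by case: I => // [|] _; rewrite normr0; apply: integral_ge0 => t _; exact: eint_ge0.
rewrite -abse_EFin fineK //.
apply: le_trans (le_abse_integral leb measurableT _) _; first exact/measurable_EFinP.
apply: ge0_le_integral => //; first exact/measurableT_comp/measurable_EFinP.
by move=> t _; exact: (IH _ _ _ _ mu mw (fun _ _ => w0 _ _) (fun _ _ => uw _ _) (s, t)).
Qed.

Lemma eint_le n : forall d (T : measurableType d) (f g : T -> 'rV[R]_n -> \bar R),
  jointly_measurable f -> jointly_measurable g ->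
  (forall s v, 0 <= f s v)%E -> (forall s v, f s v <= g s v)%E ->
  forall s, (eint (f s) <= eint (g s))%E.
Proof.
elim: n => [|n IH] d T f g mf mg f0 fg s /=; first exact: fg.
have g0 s' v : (0 <= g s' v)%E by exact: le_trans (fg s' v).
apply: ge0_le_integral => //.
- by move=> t _; exact: eint_ge0.
- exact: measurable_fun_pair2 s (@measurable_eint n _ _ _ mf (fun _ _ => f0 _ _)).
- exact: measurable_fun_pair2 s (@measurable_eint n _ _ _ mg (fun _ _ => g0 _ _)).
by move=> t _; exact: (IH _ _ _ _ mf mg (fun _ _ => f0 _ _) (fun _ _ => fg _ _) (s, t)).
Qed.

Lemma eintD n : forall d (T : measurableType d) (f g : T -> 'rV[R]_n -> \bar R),
  jointly_measurable f -> jointly_measurable g ->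
  (forall s v, 0 <= f s v)%E -> (forall s v, 0 <= g s v)%E ->
  forall s, eint (fun v => f s v + g s v)%E = (eint (f s) + eint (g s))%E.
Proof.
elim: n => [|n IH] d T f g mf mg f0 g0 s //=.
rewrite -ge0_integralD //.
- apply: eq_integral => t _.
  exact: (IH _ _ _ _ mf mg (fun _ _ => f0 _ _) (fun _ _ => g0 _ _) (s, t)).
- by move=> t _; exact: eint_ge0.
- exact: measurable_fun_pair2 s (@measurable_eint n _ _ _ mf (fun _ _ => f0 _ _)).
- by move=> t _; exact: eint_ge0.
- exact: measurable_fun_pair2 s (@measurable_eint n _ _ _ mg (fun _ _ => g0 _ _)).
Qed.

Lemma Rintegral_lincomb (I : finType) (a : I -> R) (g : I -> R -> R) :
  (forall i, leb.-integrable setT (EFin \o g i)) ->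
  \int[leb]_(t in setT) (\sum_i a i * g i t) = \sum_i a i * \int[leb]_(t in setT) g i t.
Proof.
move=> ig; rewrite /Rintegral.
rewrite (_ : (\int[leb]_(t in setT) _)%E =
    \sum_i \int[leb]_(t in setT) ((a i)%:E * (g i t)%:E))%E; last first.
  rewrite -integral_sum //; last by move=> i; apply: integrableZl => //; exact: ig.
  by apply: eq_integral => t _; rewrite -sumEFin; apply: eq_bigr => i _; rewrite EFinM.
rewrite (_ : (\sum_i _)%E =
    (\sum_i a i * fine (\int[leb]_(t in setT) (g i t)%:E))%:E) //.
rewrite -sumEFin; apply: eq_bigr => i _.
rewrite integralZl //; last exact: ig.
by rewrite -[X in (_ * X)%E = _](fineK (integrable_fin_num measurableT (ig i))).
Qed.

Lemma integrable_rint_slice n d (T : measurableType d) (u : T -> 'rV[R]_n.+1 -> R)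
    (w : T -> 'rV[R]_n.+1 -> \bar R) s :
  jointly_measurable u -> jointly_measurable w -> (forall s v, 0 <= w s v)%E ->
  (forall s v, `|u s v|%:E <= w s v)%E -> (eint (w s) < +oo)%E ->
  leb.-integrable setT (EFin \o fun t => rint (fun v => u s (row_mx t%:M v))).
Proof.
move=> mu mw w0 uw ws; apply/integrableP; split.
  apply/measurable_EFinP; exact: measurable_fun_pair2 s (@measurable_rint n _ _ _ mu).
apply: le_lt_trans ws; apply: ge0_le_integral => //.
- apply/measurableT_comp/measurable_EFinP => //.
  exact: measurable_fun_pair2 s (@measurable_rint n _ _ _ mu).
- exact: measurable_fun_pair2 s (@measurable_eint n _ _ _ mw (fun _ _ => w0 _ _)).
move=> t _.
exact: (@abs_rint_le n _ _ _ _ mu mw (fun _ _ => w0 _ _) (fun _ _ => uw _ _) (s, t)).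
Qed.

Lemma ae_eint_slice_fin n d (T : measurableType d) (w : T -> 'rV[R]_n.+1 -> \bar R) s :
  jointly_measurable w -> (forall s v, 0 <= w s v)%E -> (eint (w s) < +oo)%E ->
  {ae leb, forall t, eint (fun v => w s (row_mx t%:M v)) < +oo}%E.
Proof.
move=> mw w0 ws.
have iw : leb.-integrable setT (fun t => eint (fun v => w s (row_mx t%:M v))).
  apply/integrableP; split.
    exact: measurable_fun_pair2 s (@measurable_eint n _ _ _ mw (fun _ _ => w0 _ _)).
  by under eq_integral do rewrite gee0_abs ?eint_ge0//.
apply: filterS (integrable_ae measurableT iw) => t /(_ Logic.I).
by rewrite ge0_fin_numE // eint_ge0.
Qed.

Lemma rint_lincomb n : forall d (T : measurableType d) (I : finType) (a : I -> R)
    (u : I -> T -> 'rV[R]_n -> R) (w : I -> T -> 'rV[R]_n -> \bar R)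
    (U : T -> 'rV[R]_n -> R),
  (forall i, jointly_measurable (u i)) -> (forall i, jointly_measurable (w i)) ->
  jointly_measurable U ->
  (forall i s v, 0 <= w i s v)%E -> (forall i s v, `|u i s v|%:E <= w i s v)%E ->
  (forall s v, (forall i, w i s v < +oo)%E -> U s v = \sum_i a i * u i s v) ->
  forall s, (forall i, eint (w i s) < +oo)%E -> rint (U s) = \sum_i a i * rint (u i s).
Proof.
elim: n => [|n IH] d T I a u w U mu mw mU w0 uw Ulin s ws /=; first exact: Ulin.
rewrite -Rintegral_lincomb; last first.
  by move=> i; exact: integrable_rint_slice (mu i) (mw i) (w0 i) (uw i) (ws i).
rewrite /Rintegral; congr fine; apply: ae_eq_integral => //.
- apply/measurable_EFinP; exact: measurable_fun_pair2 s (@measurable_rint n _ _ _ mU).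
- apply/measurable_EFinP; apply: measurable_sum => i; apply: measurable_funM => //.
  exact: measurable_fun_pair2 s (@measurable_rint n _ _ _ (mu i)).
have wfin : {ae leb, forall t i, eint (fun v => w i s (row_mx t%:M v)) < +oo}%E.
  apply: filter_forall => i.
  exact: ae_eint_slice_fin (mw i) (w0 i) (ws i).
have ? : Filter (nbhs (almost_everywhere leb)) by exact: ae_filter_ringOfSetsType.
apply: filterS wfin => t wt _; congr EFin.
exact: (IH _ (T * R)%type I a _ _ _ mu mw mU (fun i _ _ => w0 i _ _)
  (fun i _ _ => uw i _ _) (fun _ _ wv => Ulin _ _ wv) (s, t) wt).
Qed.
End ParametricIntegrals.

Section PhaseSpace.
Variables (R : realType) (d : nat).
Implicit Types f g h W : 'rV[R]_d -> 'rV[R]_d -> R.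

Definition phase_measurable f :=
  forall d' (T : measurableType d') (X P : T -> 'rV[R]_d),
  (forall i, measurable_fun setT (fun s => X s 0 i)) ->
  (forall i, measurable_fun setT (fun s => P s 0 i)) ->
  measurable_fun setT (fun s => f (X s) (P s)).

Lemma open_box (O : set ('rV[R]_d * 'rV[R]_d)) y : open O -> O y ->
  exists2 e : R, 0 < e & forall z : 'rV[R]_d * 'rV[R]_d, (forall j, `|z.1 0 j - y.1 0 j| < e) ->
    (forall j, `|z.2 0 j - y.2 0 j| < e) -> O z.
Proof.
rewrite openE => /(_ y) Oy /Oy /nbhs_ballP[e e0 He]; exists e => // z z1 z2.
by apply: He; split; split => // i j; rewrite (ord1 i) /ball /= distrC; [exact: z1|exact: z2].
Qed.

Lemma measurable_preimage_open d' (T : measurableType d') (X P : T -> 'rV[R]_d) :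
  (forall i, measurable_fun setT (fun s => X s 0 i)) ->
  (forall i, measurable_fun setT (fun s => P s 0 i)) ->
  forall O, open O -> measurable [set s | O (X s, P s)].
Proof.
move=> mX mP O oO.
pose box (k : 'rV[rat]_d * 'rV[rat]_d * rat) := [set z : 'rV[R]_d * 'rV[R]_d |
  (forall j, `|z.1 0 j - ratr (k.1.1 0 j)| < ratr k.2) /\
  (forall j, `|z.2 0 j - ratr (k.1.2 0 j)| < ratr k.2)].
have ball_meas (g : T -> R) c r : measurable_fun setT g -> measurable [set s | `|g s - c| < r].
  move=> mg; rewrite (_ : [set s | _] = setT `&` g @^-1` `]c - r, c + r[); first exact: mg.
  by apply/seteqP; split => [s|s [_]] /=; rewrite in_itv /= ltr_distl.
have -> : [set s | O (X s, P s)] = \bigcup_k [set s | box k `<=` O /\ box k (X s, P s)].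
  apply/seteqP; split; last by move=> s [k _ [+ bk]]; apply.
  move=> s /= Os; have [e e0 He] := open_box oO Os.
  have [r] : exists r : rat, ratr r \in `]0, e / 2[ by apply: rat_in_itvoo; rewrite divr_gt0.
  rewrite in_itv /= => /andP[r0 re].
  have near_rat (c : R) : exists q : rat, ratr q \in `]c - ratr r, c + ratr r[.
    by apply: rat_in_itvoo; rewrite ltrBlDr -addrA ltrDl addr_gt0.
  have /choice[qx qxP] := fun j => near_rat (X s 0 j).
  have /choice[qp qpP] := fun j => near_rat (P s 0 j).
  have close2 (a b c : R) : `|a - b| < ratr r -> b \in `]c - ratr r, c + ratr r[ ->
      `|a - c| < e.
    rewrite in_itv /= -ltr_distl => ab bc.
    rewrite (le_lt_trans (ler_distD b _ _)) // (lt_le_trans (ltrD ab bc)) //.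
    by rewrite -mulr2n -mulr_natr -ler_pdivlMr // ltW.
  exists (\row_j qx j, \row_j qp j, r) => //; split.
    move=> z [z1 z2]; apply: He => j /=.
    - by apply: close2 (qxP j); move: (z1 j); rewrite mxE.
    - by apply: close2 (qpP j); move: (z2 j); rewrite mxE.
  split => j /=; rewrite mxE distrC ltr_distl.
  - by move: (qxP j); rewrite in_itv.
  - by move: (qpP j); rewrite in_itv.
apply: countable_bigcupT_measurable; first exact: countableP.
move=> k; have [sub|nsub] := pselect (box k `<=` O); last first.
  rewrite (_ : [set s | _] = set0); first exact: measurable0.
  by apply/seteqP; split => s // [].
rewrite (_ : [set s | _] = \bigcap_(j in setT)
    ([set s | `|X s 0 j - ratr (k.1.1 0 j)| < ratr k.2] `&`
     [set s | `|P s 0 j - ratr (k.1.2 0 j)| < ratr k.2])).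
  apply: fin_bigcap_measurable; first exact: finite_finset.
  by move=> j _; apply: measurableI; exact: ball_meas.
apply/seteqP; split => s /=; first by move=> [_ [b1 b2]] j _; split; [exact: b1|exact: b2].
by move=> b; split => //; split => j; have [] := b j Logic.I.
Qed.

Lemma borel_phase_measurable f :
  borel_fun (fun xp : 'rV[R]_d * 'rV[R]_d => f xp.1 xp.2) -> phase_measurable f.
Proof.
move=> bf d' T X P mX mP _ B mB; rewrite setTI.
pose C := [set A : set ('rV[R]_d * 'rV[R]_d) | measurable [set s | A (X s, P s)]].
have sC : sigma_algebra setT C.
  split.
  - by rewrite /C /= (_ : [set s | _] = set0) //; exact: measurable0.
  - move=> A; rewrite /C /= => mA.
    have -> : [set s | (setT `\` A) (X s, P s)] = setT `\` [set s | A (X s, P s)] by [].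
    exact: measurableD.
  - move=> A mA; rewrite /C /=.
    have -> : [set s | (\bigcup_k A k) (X s, P s)] = \bigcup_k [set s | A k (X s, P s)] by [].
    exact: bigcupT_measurable.
exact: (smallest_sub sC (fun O oO => measurable_preimage_open mX mP oO)) _ (bf B mB).
Qed.

Lemma phase_measurableM f g :
  phase_measurable f -> phase_measurable g -> phase_measurable (fun x p => f x p * g x p).
Proof. by move=> mf mg d' T X P mX mP; apply: measurable_funM; [exact: mf|exact: mg]. Qed.

Lemma phase_measurableD f g :
  phase_measurable f -> phase_measurable g -> phase_measurable (fun x p => f x p + g x p).
Proof. by move=> mf mg d' T X P mX mP; apply: measurable_funD; [exact: mf|exact: mg]. Qed.

Lemma phase_measurable_lincomb (I : finType) (a : I -> R) (f : I -> 'rV[R]_d -> 'rV[R]_d -> R) :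
  (forall i, phase_measurable (f i)) -> phase_measurable (fun x p => \sum_i a i * f i x p).
Proof.
move=> mf d' T X P mX mP; apply: measurable_sum => i.
by apply: measurable_funM; [exact: measurable_cst | exact: mf].
Qed.

Lemma phase_measurable_norm f : phase_measurable f -> phase_measurable (fun x p => `|f x p|).
Proof.
by move=> mf d' T X P mX mP; apply: measurableT_comp; [exact: normr_measurable | exact: mf].
Qed.

Definition field_measurable (Y : 'rV[R]_d -> 'rV[R]_d -> 'rV[R]_d) :=
  forall i, phase_measurable (fun x p => Y x p 0 i).

Lemma field_measurable_x : field_measurable (fun x _ => x).
Proof. by move=> i d' T X P mX mP; exact: mX. Qed.

Lemma field_measurable_p : field_measurable (fun _ p => p).
Proof. by move=> i d' T X P mX mP; exact: mP. Qed.

Lemma phase_measurable_dotv Y Z : field_measurable Y -> field_measurable Z ->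
  phase_measurable (fun x p => dotv (Y x p) (Z x p)).
Proof.
move=> mY mZ d' T X P mX mP; apply: measurable_sum => i.
by apply: measurable_funM; [exact: mY | exact: mZ].
Qed.

(* The lemmas on [jointly] concern parametrized families; for a single phase-space
   integrand the parameter is a dummy copy of R. *)
Lemma jointly_measurable_section f x :
  phase_measurable f -> jointly_measurable (fun (_ : R) p => f x p).
Proof.
move=> mf; apply: jointly_intro => d' T s0 P _ mP.
by apply: mf => // i; exact: measurable_cst.
Qed.

Lemma jointly_measurable_rint f :
  phase_measurable f -> jointly_measurable (fun (_ : R) x => rint (f x)).
Proof.
move=> mf.
have J : @jointly R ('rV[R]_d -> R)
    (fun dT (T : measurableType dT) (u : T -> 'rV[R]_d -> R) => jointly_measurable u)
    d _ R (fun _ x => f x).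
  apply: jointly_intro => d' T s0 X _ mX; apply: jointly_intro => d'' T' s1 P ms1 mP.
  by apply: mf => // i; exact: measurableT_comp (mX i) ms1.
exact: (jointly_comp (phi := @rint R d)
  (B2 := fun dT (T : measurableType dT) (g : T -> R) => measurable_fun setT g)
  (fun dT T u (mu : jointly_measurable u) => measurable_rint mu) J).
Qed.

Lemma jointly_measurable_eint f : phase_measurable f -> (forall x p, 0 <= f x p) ->
  jointly_measurable (fun (_ : R) x => eint (fun p => (f x p)%:E)).
Proof.
move=> mf f0.
have J : @jointly R ('rV[R]_d -> \bar R)
    (fun dT (T : measurableType dT) (u : T -> 'rV[R]_d -> \bar R) =>
       jointly_measurable u /\ forall s v, (0 <= u s v)%E) d _ R
    (fun _ x p => (f x p)%:E).
  apply: jointly_intro => d' T s0 X _ mX; split; last by move=> s v; rewrite lee_fin.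
  apply: jointly_intro => d'' T' s1 P ms1 mP; apply/measurable_EFinP.
  by apply: mf => // i; exact: measurableT_comp (mX i) ms1.
exact: (jointly_comp (phi := @eint R d)
  (B2 := fun dT (T : measurableType dT) (g : T -> \bar R) => measurable_fun setT g)
  (fun dT T u (mu : _ /\ _) => measurable_eint mu.1 mu.2) J).
Qed.

Lemma jointly_measurable_esection f x :
  phase_measurable f -> jointly_measurable (fun (_ : R) p => (f x p)%:E).
Proof.
move=> mf; apply: jointly_intro => d' T s0 P _ mP; apply/measurable_EFinP.
by apply: mf => // i; exact: measurable_cst.
Qed.

Lemma pint_lincomb (I : finType) (a : I -> R) (f : I -> 'rV[R]_d -> 'rV[R]_d -> R) :
  (forall i, phase_measurable (f i)) -> (forall i, pfin (f i)) ->
  pint (fun x p => \sum_i a i * f i x p) = \sum_i a i * pint (f i).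
Proof.
move=> mf ff.
have mF := phase_measurable_lincomb a mf.
have mfn i := phase_measurable_norm (mf i).
have inner x : (forall i, eint (fun p => `|f i x p|%:E) < +oo)%E ->
    rint (fun p => \sum_i a i * f i x p) = \sum_i a i * rint (f i x).
  exact: (rint_lincomb (fun i => jointly_measurable_section x (mf i))
    (fun i => jointly_measurable_esection x (mfn i)) (jointly_measurable_section x mF)
    (fun _ _ _ => normr_ge0 _) (fun _ _ _ => lexx _) (fun _ _ _ => erefl) (s := 0)).
have abs_inner i x : (`|rint (f i x)|%:E <= eint (fun p => `|f i x p|%:E))%E.
  exact: (abs_rint_le (jointly_measurable_section x (mf i))
    (jointly_measurable_esection x (mfn i)) (fun _ _ => normr_ge0 _) (fun _ _ => lexx _) 0).
have eint_abs_ge0 i x : (0 <= eint (fun p => `|f i x p|%:E))%E by exact: eint_ge0.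
exact: (rint_lincomb (fun i => jointly_measurable_rint (mf i))
  (fun i => jointly_measurable_eint (mfn i) (fun _ _ => normr_ge0 _))
  (jointly_measurable_rint mF) (fun i _ => eint_abs_ge0 i)
  (fun i _ => abs_inner i) (fun _ => inner) (s := 0) ff).
Qed.

Definition peint f := eint (fun x => eint (fun p => (f x p)%:E)).

Lemma peint_le f g : phase_measurable f -> phase_measurable g ->
  (forall x p, 0 <= f x p) -> (forall x p, f x p <= g x p) -> (peint f <= peint g)%E.
Proof.
move=> mf mg f0 fg.
have g0 x p : 0 <= g x p by exact: le_trans (fg x p).
apply: (eint_le (jointly_measurable_eint mf f0) (jointly_measurable_eint mg g0) _ _ 0).
  by move=> _ x; apply: eint_ge0 => p; rewrite lee_fin.
by move=> _ x; apply: (eint_le (jointly_measurable_esection x mf)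
  (jointly_measurable_esection x mg) _ _ 0) => _ p; rewrite lee_fin ?f0 ?fg.
Qed.

Lemma peintD f g : phase_measurable f -> phase_measurable g ->
  (forall x p, 0 <= f x p) -> (forall x p, 0 <= g x p) ->
  peint (fun x p => f x p + g x p) = (peint f + peint g)%E.
Proof.
move=> mf mg f0 g0.
rewrite /peint -(eintD (jointly_measurable_eint mf f0) (jointly_measurable_eint mg g0) _ _ 0);
  try by move=> _ x; apply: eint_ge0 => p; rewrite lee_fin.
congr eint; apply/funext => x.
rewrite -(eintD (jointly_measurable_esection x mf) (jointly_measurable_esection x mg) _ _ 0);
  try by move=> _ p; rewrite lee_fin.
by congr eint; apply/funext => p; rewrite EFinD.
Qed.

Lemma pfin_dominated f g h : phase_measurable f -> phase_measurable g -> phase_measurable h ->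
  (forall x p, `|f x p| <= `|g x p| + `|h x p|) -> pfin g -> pfin h -> pfin f.
Proof.
move=> mf mg mh fgh fg fh.
have mgn := phase_measurable_norm mg; have mhn := phase_measurable_norm mh.
have le_gh : (peint (fun x p => `|f x p|%R) <=
    peint (fun x p => `|g x p| + `|h x p|)%R)%E.
  apply: peint_le => //; first exact: phase_measurable_norm.
  exact: phase_measurableD.
apply: le_lt_trans le_gh _.
by rewrite peintD //; exact: lte_add_pinfty.
Qed.
End PhaseSpace.

Section CenteredMoments.
Variables (R : realType) (d : nat).
Implicit Types (u v c e : 'rV[R]_d) (W : 'rV[R]_d -> 'rV[R]_d -> R)
  (Y Z : 'rV[R]_d -> 'rV[R]_d -> 'rV[R]_d).

Lemma sqn_ge0 v : 0 <= sqn v.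
Proof. by apply: sumr_ge0 => i _; rewrite -expr2 sqr_ge0. Qed.

Lemma abs_coord_le v i : `|v 0 i| <= 1 + sqn v.
Proof.
have vi : v 0 i ^+ 2 <= sqn v.
  rewrite /sqn /dotv (bigD1 i) //= expr2 lerDl.
  by apply: sumr_ge0 => j _; rewrite -expr2 sqr_ge0.
have : `|v 0 i| <= 1 + v 0 i ^+ 2.
  by case: (leP 0 (v 0 i)) => v0; [rewrite ger0_norm | rewrite ltr0_norm]; nra.
lra.
Qed.

Lemma abs_dotv_le u v : `|dotv u v| <= sqn u + sqn v.
Proof.
rewrite /sqn /dotv -big_split /=; apply: le_trans (ler_norm_sum _ _ _) _.
apply: ler_sum => i _; rewrite normrM.
have normK (a : R) : `|a| ^+ 2 = a * a by rewrite real_normK ?num_real // expr2.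
have := sqr_ge0 (`|u 0 i| - `|v 0 i|); have := normK (u 0 i); have := normK (v 0 i).
nra.
Qed.

Lemma sqn_affine (a u v : 'rV[R]_d) (z : R) : (forall i, a 0 i = u 0 i + z * v 0 i) ->
  sqn a = sqn u + 2 * z * dotv u v + z ^+ 2 * sqn v.
Proof.
move=> aE; rewrite /sqn /dotv !mulr_sumr -!big_split /=.
by apply: eq_bigr => i _; rewrite aE; ring.
Qed.

Lemma pfin_coordM W Y i : phase_measurable W -> field_measurable Y ->
  pfin W -> pfin (fun x p => sqn (Y x p) * W x p) ->
  pfin (fun x p => Y x p 0 i * W x p).
Proof.
move=> mW mY fW fYW; apply: pfin_dominated fW fYW.
- exact: phase_measurableM.
- exact: mW.
- by apply: phase_measurableM => //; exact: phase_measurable_dotv.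
move=> x p; rewrite !normrM (ger0_norm (sqn_ge0 _)) -[X in X + _]mul1r -mulrDl.
by rewrite ler_wpM2r ?abs_coord_le.
Qed.

Lemma pfin_dotvM W Y Z : phase_measurable W -> field_measurable Y -> field_measurable Z ->
  pfin (fun x p => sqn (Y x p) * W x p) -> pfin (fun x p => sqn (Z x p) * W x p) ->
  pfin (fun x p => dotv (Y x p) (Z x p) * W x p).
Proof.
move=> mW mY mZ fYW fZW; apply: pfin_dominated fYW fZW.
- by apply: phase_measurableM => //; exact: phase_measurable_dotv.
- by apply: phase_measurableM => //; exact: phase_measurable_dotv.
- by apply: phase_measurableM => //; exact: phase_measurable_dotv.
move=> x p; rewrite !normrM !(ger0_norm (sqn_ge0 _)) -mulrDl.
by rewrite ler_wpM2r ?abs_dotv_le.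
Qed.

Lemma pint_centered_dotv W Y Z c e :
  phase_measurable W -> field_measurable Y -> field_measurable Z -> pfin W ->
  pfin (fun x p => sqn (Y x p) * W x p) -> pfin (fun x p => sqn (Z x p) * W x p) ->
  pint (fun x p => dotv (Y x p - c) (Z x p - e) * W x p) =
  pint (fun x p => dotv (Y x p) (Z x p) * W x p)
  - \sum_i e 0 i * pint (fun x p => Y x p 0 i * W x p)
  - \sum_i c 0 i * pint (fun x p => Z x p 0 i * W x p) + dotv c e * pint W.
Proof.
move=> mW mY mZ fW fYW fZW.
pose a (k : ('I_d + 'I_d) + bool) := match k with
  | inl (inl i) => - e 0 i | inl (inr i) => - c 0 i | inr true => 1 | inr false => dotv c e
  end.
pose f (k : ('I_d + 'I_d) + bool) x p := match k with
  | inl (inl i) => Y x p 0 i * W x p | inl (inr i) => Z x p 0 i * W x p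
  | inr true => dotv (Y x p) (Z x p) * W x p | inr false => W x p
  end.
have -> : (fun x p => dotv (Y x p - c) (Z x p - e) * W x p) =
    (fun x p => \sum_k a k * f k x p).
  apply/funext => x; apply/funext => p.
  rewrite !big_sumType big_bool /= mul1r /dotv !mulr_suml -!big_split /=.
  by apply: eq_bigr => i _; rewrite !mxE; ring.
rewrite pint_lincomb.
- rewrite !big_sumType big_bool /f /= mul1r.
  under eq_bigr do rewrite mulNr.
  under [X in _ + X + _]eq_bigr do rewrite mulNr.
  by rewrite !sumrN; ring.
- rewrite /f => -[[i|i]|[]] //; apply: phase_measurableM => //.
  exact: phase_measurable_dotv.
rewrite /f => -[[i|i]|[]];
  [exact: pfin_coordM | exact: pfin_coordM | exact: pfin_dotvM | exact: fW].
Qed.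
End CenteredMoments.

Section VarianceIdentities.
Variables (R : realType) (d : nat) (W : R -> 'rV[R]_d -> 'rV[R]_d -> R) (z : R).
Hypotheses (mW : phase_measurable (W z)) (fW : pfin (W z)) (W1 : pint (W z) = 1).
Hypothesis fX : pfin (fun x p => sqn x * W z x p).
Hypothesis fP : pfin (fun x p => sqn p * W z x p).

Let sum_xbar (v : 'rV[R]_d) : \sum_i v 0 i * pint (fun x p => x 0 i * W z x p) = dotv v (xbar W z).
Proof. by apply: eq_bigr => i _; rewrite mxE. Qed.

Let sum_pbar (v : 'rV[R]_d) : \sum_i v 0 i * pint (fun x p => p 0 i * W z x p) = dotv v (pbar W z).
Proof. by apply: eq_bigr => i _; rewrite mxE. Qed.

Lemma Vx_moments : Vx W z = mom_xx W z - sqn (xbar W z).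
Proof.
rewrite /Vx /sqn (pint_centered_dotv (Y := fun x _ => x) (Z := fun x _ => x)) //;
  try exact: field_measurable_x.
by rewrite !sum_xbar W1 /mom_xx /sqn; ring.
Qed.

Lemma Vp_moments : Vp W z = mom_pp W z - sqn (pbar W z).
Proof.
rewrite /Vp /sqn (pint_centered_dotv (Y := fun _ p => p) (Z := fun _ p => p)) //;
  try exact: field_measurable_p.
by rewrite !sum_pbar W1 /mom_pp /sqn; ring.
Qed.

Lemma Vxp_moments : Vxp W z = mom_xp W z - dotv (xbar W z) (pbar W z).
Proof.
rewrite /Vxp (pint_centered_dotv (Y := fun x _ => x) (Z := fun _ p => p)) //;
  try solve [exact: field_measurable_x | exact: field_measurable_p].
rewrite sum_xbar sum_pbar W1 /mom_xp.
have dotvC u v : dotv u v = dotv v u by apply: eq_bigr => i _; rewrite mulrC.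
by rewrite [dotv (pbar W z) _]dotvC; ring.
Qed.
End VarianceIdentities.

Section OdeComparison.
Variables (R : realType) (zs : \bar R).

Lemma cubic_is_derive (a0 a1 a2 a3 x : R) :
  is_derive x 1 (fun z : R => a0 + a1 * z + a2 * z ^+ 2 + a3 * z ^+ 3)
    (a1 + 2 * a2 * x + 3 * a3 * x ^+ 2).
Proof.
pose q : {poly R} := a0%:P + a1%:P * 'X + a2%:P * 'X^2 + a3%:P * 'X^3.
have -> : (fun z : R => a0 + a1 * z + a2 * z ^+ 2 + a3 * z ^+ 3) = horner q.
  by apply/funext => z; rewrite /q !hornerE.
apply: (is_derive_eq (is_derive_poly q x)).
by rewrite /q !poly.derivE !hornerE /=; ring.
Qed.

Lemma ode_lawB_cubic (f f' : R -> R) (a0 a1 a2 a3 : R) : ode_law zs f f' ->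
  ode_law zs (fun z => f z - (a0 + a1 * z + a2 * z ^+ 2 + a3 * z ^+ 3))
    (fun z => f' z - (a1 + 2 * a2 * z + 3 * a3 * z ^+ 2)).
Proof.
move=> [cf Df]; split => [x|z z0 zzs]; last first.
  exact: (is_deriveB (Df z z0 zzs) (cubic_is_derive _ _ _ _ _)).
have cq : continuous (fun z : R => a0 + a1 * z + a2 * z ^+ 2 + a3 * z ^+ 3).
  move=> y; apply/differentiable_continuous/derivable1_diffP.
  by case: (cubic_is_derive a0 a1 a2 a3 y).
exact: (@continuousB _ _ (subspace (exist_itv zs)) f _ x (cf x)
  (@continuous_subspaceT _ _ (exist_itv zs) _ cq x)).
Qed.

Lemma ode_lawN (f f' : R -> R) : ode_law zs f f' ->
  ode_law zs (fun z => - f z) (fun z => - f' z).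
Proof.
move=> [cf Df]; split => [x|z z0 zzs]; last exact: (is_deriveN (Df z z0 zzs)).
exact: (@continuousN _ _ (subspace (exist_itv zs)) f x (cf x)).
Qed.

Lemma ode_law_nonincreasing (f f' : R -> R) : ode_law zs f f' ->
  (forall z, 0 < z -> (z%:E < zs)%E -> f' z <= 0) ->
  forall z, exist_itv zs z -> f z <= f 0.
Proof.
move=> [cf Df] f'_le0 z [+ zzs]; rewrite le_eqVlt => /predU1P[<- //|z0].
have sub : [set` `[0, z]] `<=` exist_itv zs.
  move=> y /=; rewrite in_itv /= => /andP[y0 yz]; split => //.
  by apply: le_lt_trans zzs; rewrite lee_fin.
have Df' x : x \in `]0, z[ -> is_derive x 1 f (f' x).
  rewrite in_itv /= => /andP[x0 xz]; apply: Df => //.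
  by apply: lt_trans zzs; rewrite lte_fin.
have [c] := MVT z0 Df' (continuous_subspaceW sub cf).
rewrite in_itv /= => /andP[c0 cz] E; rewrite -subr_le0 E subr0.
apply: mulr_le0_ge0; last exact: ltW.
by apply: f'_le0 => //; apply: lt_trans zzs; rewrite lte_fin.
Qed.

Lemma ode_law_le_cubic (f f' : R -> R) (a1 a2 a3 : R) : ode_law zs f f' ->
  (forall z, 0 < z -> (z%:E < zs)%E -> f' z <= a1 + 2 * a2 * z + 3 * a3 * z ^+ 2) ->
  forall z, exist_itv zs z -> f z <= f 0 + a1 * z + a2 * z ^+ 2 + a3 * z ^+ 3.
Proof.
move=> ff' f'_le z zz.
have gap_le0 y : 0 < y -> (y%:E < zs)%E ->
    f' y - (a1 + 2 * a2 * y + 3 * a3 * y ^+ 2) <= 0.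
  by move=> y0 yzs; rewrite subr_le0; exact: f'_le.
have := ode_law_nonincreasing (ode_lawB_cubic 0 a1 a2 a3 ff') gap_le0 zz.
rewrite !(mulr0, expr0n) /=; lra.
Qed.

Lemma ode_law_linear (f f' : R -> R) (a : R) : ode_law zs f f' ->
  (forall z, 0 < z -> (z%:E < zs)%E -> f' z = a) ->
  forall z, exist_itv zs z -> f z = f 0 + a * z.
Proof.
move=> ff' f'a z zz.
have f'_le y : 0 < y -> (y%:E < zs)%E -> f' y <= a + 2 * 0 * y + 3 * 0 * y ^+ 2.
  by move=> y0 yzs; rewrite f'a // !mulr0 !mul0r !addr0.
have Nf'_le y : 0 < y -> (y%:E < zs)%E -> - f' y <= - a + 2 * 0 * y + 3 * 0 * y ^+ 2.
  by move=> y0 yzs; rewrite f'a // !mulr0 !mul0r !addr0.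
have := ode_law_le_cubic ff' f'_le zz.
have := ode_law_le_cubic (ode_lawN ff') Nf'_le zz.
rewrite !mul0r !addr0; lra.
Qed.
End OdeComparison.

Lemma Rconst_ge0 (R : realType) d (L : scattering) (Phi : R -> 'rV[R]_d -> R) :
  power_spectrum Phi -> 0 <= Rconst L Phi.
Proof.
case=> _ Phi0 _ _; case: L => /=.
  apply: mulr_ge0; first by rewrite mulr_ge0 ?pi_ge0.
  by apply: rint_ge0 => q; rewrite mulr_ge0 ?sqn_ge0.
rewrite mulr_ge0 // /mxtrace sumr_ge0 // => i _; rewrite mxE mulr_ge0 ?pi_ge0 //.
by apply: rint_ge0 => q; rewrite -mulrA mulr_ge0 // -expr2 sqr_ge0.
Qed.

(* For [Rc = 0] the quotient is [0] by the convention [x / 0 = 0]. *)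
Lemma blowup_time_ge0 (R : realType) (Rc k V H0 Hb : R) : 0 <= Rc -> 0 < k ->
  V < 0 \/ 0 < V /\ H0 < Hb - Num.sqrt (2 * Rc * V / k) ->
  0 <= (Hb - H0 + Num.sqrt ((H0 - Hb) ^+ 2 - 2 * Rc * V / k)) / Rc.
Proof.
move=> Rc0 k0 [V0|[V0 H0lt]]; apply: divr_ge0 => //.
  have q_le0 : 2 * Rc * V / k <= 0.
    apply: mulr_le0_ge0; last by rewrite invr_ge0 ltW.
    by apply: mulr_ge0_le0; [rewrite mulr_ge0 | exact: ltW].
  have : `|H0 - Hb| <= Num.sqrt ((H0 - Hb) ^+ 2 - 2 * Rc * V / k).
    by rewrite -sqrtr_sqr ler_sqrt ?lerDl ?oppr_ge0 // addr_ge0 ?sqr_ge0 ?oppr_ge0.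
  have := ler_norm (H0 - Hb); lra.
have := sqrtr_ge0 ((H0 - Hb) ^+ 2 - 2 * Rc * V / k).
have := sqrtr_ge0 (2 * Rc * V / k); lra.
Qed.

Section VirialBound.
Variables (R : realType) (d : nat) (sigma g Rc : R).
Variables (W : R -> 'rV[R]_d -> 'rV[R]_d -> R) (zs : \bar R).
Hypothesis ds2 : 2 <= d%:R * sigma.
Hypothesis sol : standing_assumptions sigma g Rc W zs.

Local Notation k := (d%:R * sigma).
Local Notation H0 := (Ham sigma g W 0).
Local Notation Hb := (Hbar W 0).
Local Notation S := (sqn (pbar W 0)).

Let sol_at := proj1 (proj2 sol).
Let laws := proj2 (proj2 sol).

Let exist_itv0 : exist_itv zs 0.
Proof. by split; last exact: proj1 sol. Qed.

Let exist_itv_pos z : 0 < z -> (z%:E < zs)%E -> exist_itv zs z.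
Proof. by move=> z0 zzs; split => //; exact: ltW. Qed.

Let variances z : exist_itv zs z ->
  [/\ Vx W z = mom_xx W z - sqn (xbar W z), Vp W z = mom_pp W z - sqn (pbar W z),
      Vxp W z = mom_xp W z - dotv (xbar W z) (pbar W z) & 0 < Vp W z].
Proof.
case/sol_at => -[/borel_phase_measurable mW _] [[fW W1] _] [fX fP _ Vp0] _ _.
by split; [exact: Vx_moments | exact: Vp_moments | exact: Vxp_moments | exact: Vp0].
Qed.

Lemma pbar_const z : exist_itv zs z -> pbar W z = pbar W 0.
Proof.
move=> zz; apply/rowP => i; rewrite !mxE.
have [_ mp _ _ _] := laws.
by rewrite [LHS](ode_law_linear (mp i) (fun _ _ _ => erefl) zz) mul0r addr0.
Qed.

Lemma xbar_affine z i : exist_itv zs z -> xbar W z 0 i = xbar W 0 0 i + z * pbar W 0 0 i.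
Proof.
move=> zz; have [mx _ _ _ _] := laws.
have p_const y : 0 < y -> (y%:E < zs)%E -> mom_p W y i = pbar W 0 0 i.
  by move=> y0 yzs; rewrite -(pbar_const (exist_itv_pos y0 yzs)) mxE.
by rewrite !mxE [LHS](ode_law_linear (mx i) p_const zz) mulrC mxE.
Qed.

Lemma Ham_affine z : exist_itv zs z -> Ham sigma g W z = H0 + Rc / 2 * z.
Proof. by have [_ _ _ _ hl] := laws; exact: (ode_law_linear hl (fun _ _ _ => erefl)). Qed.

(* Virial argument: by definition of [Ham] the potential term equals
   [k * (mom_pp / 2 - Ham)], so the derivative of [mom_xp] is
   [(1 - k / 2) mom_pp + k Ham], and [k >= 2], [mom_pp >= S = 2 Hb]. *)
Lemma mom_xp_deriv_le y : 0 < y -> (y%:E < zs)%E ->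
  mom_pp W y - g * k / (sigma + 1) * potint sigma W y <= S + k * (H0 - Hb) + k * Rc / 2 * y.
Proof.
move=> y0 yzs; have yy := exist_itv_pos y0 yzs.
have [_ VpE _ Vp0] := variances yy; rewrite pbar_const // in VpE.
have -> : g * k / (sigma + 1) * potint sigma W y =
    k * (2^-1 * mom_pp W y - Ham sigma g W y) by rewrite /Ham /mom_pp; ring.
rewrite Ham_affine // /Hbar.
have : 0 <= (k - 2) * (mom_pp W y - S) by rewrite mulr_ge0 // subr_ge0 //; lra.
nra.
Qed.

Lemma mom_xp_le z : exist_itv zs z ->
  mom_xp W z <= mom_xp W 0 + (S + k * (H0 - Hb)) * z + k * Rc / 4 * z ^+ 2.
Proof.
move=> zz; have [_ _ _ xpl _] := laws.
have xp'_le y : 0 < y -> (y%:E < zs)%E ->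
    mom_pp W y - g * k / (sigma + 1) * potint sigma W y <=
    S + k * (H0 - Hb) + 2 * (k * Rc / 4) * y + 3 * 0 * y ^+ 2.
  by move=> y0 yzs; have := mom_xp_deriv_le y0 yzs; lra.
by have := ode_law_le_cubic xpl xp'_le zz; lra.
Qed.

Lemma mom_xx_le z : exist_itv zs z -> mom_xx W z <=
  mom_xx W 0 + 2 * mom_xp W 0 * z + (S + k * (H0 - Hb)) * z ^+ 2 + k * Rc / 6 * z ^+ 3.
Proof.
move=> zz; have [_ _ xxl _ _] := laws.
have xx'_le y : 0 < y -> (y%:E < zs)%E -> 2 * mom_xp W y <=
    2 * mom_xp W 0 + 2 * (S + k * (H0 - Hb)) * y + 3 * (k * Rc / 6) * y ^+ 2.
  by move=> y0 yzs; have := mom_xp_le (exist_itv_pos y0 yzs); lra.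
by have := ode_law_le_cubic xxl xx'_le zz; lra.
Qed.

Lemma Vx_le z : exist_itv zs z ->
  Vx W z <= Vx W 0 + 2 * Vxp W 0 * z + k * (H0 - Hb) * z ^+ 2 + k * Rc / 6 * z ^+ 3.
Proof.
move=> zz; have [Vx0 _ Vxp0 _] := variances exist_itv0.
have [VxE _ _ _] := variances zz.
have xbarE := sqn_affine (fun i => xbar_affine i zz).
have := mom_xx_le zz; rewrite /Hbar; nra.
Qed.
End VirialBound.

Theorem proposition3 (R : realType) (d : nat) (sigma g : R) (L : scattering)
    (Phi : R -> 'rV[R]_d -> R)
    (W : R -> 'rV[R]_d -> 'rV[R]_d -> R) (zs : \bar R) :
  (1 <= d)%N -> 0 < sigma -> 2 <= d%:R * sigma -> 0 < g ->
  power_spectrum Phi ->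
  standing_assumptions sigma g (Rconst L Phi) W zs ->
  let Rc := Rconst L Phi in
  let H0 := Ham sigma g W 0 in
  let Hb := Hbar W 0 in
  let F := fun z : R => Vx W 0 + 2 * Vxp W 0 * z + d%:R * sigma * (H0 - Hb) * z ^+ 2
                        + d%:R * sigma * Rc / 3 * z ^+ 3 in
  let z0 := (Hb - H0 + Num.sqrt ((H0 - Hb) ^+ 2 - 2 * Rc * Vxp W 0 / (d%:R * sigma))) / Rc in
  F z0 <= 0 ->
  (Vxp W 0 < 0 \/
   (0 < Vxp W 0 /\ H0 < Hb - Num.sqrt (2 * Rc * Vxp W 0 / (d%:R * sigma)))) ->
  (zs <= z0%:E)%E.
Proof.
move=> _ _ ds2 _ hPhi sol Rc H0 Hb F z0 Fz0_le0 Vxp_case.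
have Rc0 : 0 <= Rc := Rconst_ge0 L hPhi.
have k0 : 0 < d%:R * sigma by apply: lt_le_trans ds2.
have z0_ge0 : 0 <= z0 := blowup_time_ge0 Rc0 k0 Vxp_case.
rewrite leNgt; apply/negP => z0_lt_zs.
have zz0 : exist_itv zs z0 by [].
have [_ _ [_ _ Vx_pos _] _ _] := proj1 (proj2 sol) z0 zz0.
have := Vx_le ds2 sol zz0; rewrite -/H0 -/Hb -/Rc.
have : 0 <= d%:R * sigma * Rc * z0 ^+ 3.
  by apply: mulr_ge0; [apply: mulr_ge0 => //; exact: ltW | exact: exprn_ge0].
rewrite /F in Fz0_le0; nra.
Qed.
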